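(* Let $\Gamma$ be a finite connected graph with $m$ edges and genus $g\ge1$, $B\in\mathbb Z^{g\times m}$ with rows a $\mathbb Z$-basis of $H_1(\Gamma,\mathbb Z)\subset\mathbb Z^m$, and $Q=BB^T$. Let $\mathbf a$ be a vertex of $V_Q$ and $[\mathbf a]$ its equivalence class. Then the convex hull of $[\mathbf a]$ equals $\mathbf a-D_{\mathbf a,Q}=\{\mathbf a-\mathbf x:\mathbf x\in D_{\mathbf a,Q}\}$, and $|[\mathbf a]|=|\mathcal D_{\mathbf a,Q}|$.
   Context: Edge lengths are all $1$, so $Q=BB^T$. $V_Q=\{\mathbf a\in\mathbb R^g:\ \mathbf a^TQ\mathbf a\le(\mathbf a-\mathbf c)^TQ(\mathbf a-\mathbf c)\ \forall\mathbf c\in\mathbb Z^g\}$. For a vertex $\mathbf a$ of $V_Q$, $\mathcal D_{\mathbf a,Q}=\{\mathbf c\in\mathbb Z^g:\ \mathbf a^TQ\mathbf a=(\mathbf a-\mathbf c)^TQ(\mathbf a-\mathbf c)\}$ and $D_{\mathbf a,Q}$ is its convex hull. On the vertex set of $V_Q$, $\mathbf a\sim\mathbf a'$ iff $\mathbf a'=\mathbf a-\mathbf c_0$ for some $\mathbf c_0\in\mathcal D_{\mathbf a,Q}$ (an equivalence relation); $[\mathbf a]$ denotes the class of $\mathbf a$. *)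

From HB Require Import structures.
From mathcomp Require Import all_boot all_order all_algebra.
From mathcomp Require Import boolp classical_sets cardinality reals.
Set Implicit Arguments.
Unset Strict Implicit.
Unset Printing Implicit Defensive.
Import Order.TTheory GRing.Theory Num.Theory.
Local Open Scope ring_scope.
Local Open Scope classical_set_scope.

(* A finite (multi)graph with vertex set 'I_n and edge set 'I_m; each edge e
   is given an (arbitrary) orientation from [src e] to [tgt e]. Loops and
   multiple edges are allowed. *)
Definition gadj (n m : nat) (src tgt : 'I_m -> 'I_n) : rel 'I_n :=
  fun u v => [exists e : 'I_m,
     ((src e == u) && (tgt e == v)) || ((tgt e == u) && (src e == v))].

Definition graph_connected (n m : nat) (src tgt : 'I_m -> 'I_n) : Prop :=
  forall u v : 'I_n, connect (gadj src tgt) u v.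

Definition boundary (n m : nat) (src tgt : 'I_m -> 'I_n) (x : 'rV[int]_m)
  : 'rV[int]_n :=
  \row_(v < n) \sum_(e < m)
     x 0 e * (((tgt e == v) : int) - ((src e == v) : int)).

Definition in_H1 (n m : nat) (src tgt : 'I_m -> 'I_n) (x : 'rV[int]_m) : Prop :=
  boundary src tgt x = 0.

Definition rows_Zbasis_H1 (n m g : nat) (src tgt : 'I_m -> 'I_n)
  (B : 'M[int]_(g, m)) : Prop :=
  (forall i : 'I_g, in_H1 src tgt (row i B)) /\
  (forall x : 'rV[int]_m, in_H1 src tgt x ->
     exists! c : 'rV[int]_g, x = c *m B).

Section Voronoi.
Variables (R : realType) (g : nat).

Definition intvec (c : 'rV[int]_g) : 'rV[R]_g := map_mx (fun z : int => z%:~R) c.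

Definition Qreal (m : nat) (B : 'M[int]_(g, m)) : 'M[R]_g :=
  map_mx (fun z : int => z%:~R) (B *m B^T).

(* quadratic form a^T Q a (points are row vectors) *)
Definition qform (Q : 'M[R]_g) (a : 'rV[R]_g) : R := (a *m Q *m a^T) 0 0.

Definition VQ (Q : 'M[R]_g) : set 'rV[R]_g :=
  [set a | forall c : 'rV[int]_g, qform Q a <= qform Q (a - intvec c)].

Definition is_vertex (Q : 'M[R]_g) (a : 'rV[R]_g) : Prop :=
  VQ Q a /\
  forall (x y : 'rV[R]_g) (t : R), VQ Q x -> VQ Q y -> 0 < t < 1 ->
    a = t *: x + (1 - t) *: y -> x = y.

Definition Dset (Q : 'M[R]_g) (a : 'rV[R]_g) : set 'rV[int]_g :=
  [set c | qform Q a = qform Q (a - intvec c)].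

Definition vclass (Q : 'M[R]_g) (a : 'rV[R]_g) : set 'rV[R]_g :=
  [set a' | is_vertex Q a' /\ exists2 c, Dset Q a c & a' = a - intvec c].

Definition convhull (A : set 'rV[R]_g) : set 'rV[R]_g :=
  [set x | exists (k : nat) (p : 'I_k -> 'rV[R]_g) (w : 'I_k -> R),
     [/\ forall i, A (p i), forall i, 0 <= w i, \sum_(i < k) w i = 1
       & x = \sum_(i < k) w i *: p i]].

End Voronoi.

From mathcomp Require Import all_boot all_order all_algebra.
From mathcomp Require Import boolp classical_sets cardinality reals.
From mathcomp Require Import lra.
Import GRing.Theory Num.Theory.
Local Open Scope ring_scope.
Local Open Scope classical_set_scope.
Local Open Scope card_scope.

(* For an integral vector v, the increment z |-> q(z + v) - q(z) of the
   quadratic form is affine in z and nonnegative on V_Q, and c lies in D_{a,Q}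
   exactly when it vanishes at a - c.  A nonnegative affine function vanishing
   at a point of a segment of V_Q through that point vanishes on the whole
   segment, and where it vanishes translation by v stays inside V_Q.  So
   extremality of a transfers to a - c, i.e. [a] = a - D_{a,Q}; the rest is
   injectivity of translation and convex hulls commuting with x |-> a - x. *)

Lemma convhull_sub_image (R : realType) (g : nat) (a : 'rV[R]_g)
    (A : set 'rV[R]_g) :
  convhull [set a - x | x in A] = [set a - x | x in convhull A].
Proof.
have sum_affine k (w : 'I_k -> R) (p : 'I_k -> 'rV[R]_g) :
    \sum_(i < k) w i = 1 ->
    \sum_(i < k) w i *: (a - p i) = a - \sum_(i < k) w i *: p i.
  move=> w1; under eq_bigr do rewrite scalerBr.
  by rewrite sumrB -scaler_suml w1 scale1r.
apply/seteqP; split => x.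
- move=> [k [p [w [Ap w0 w1 ->]]]].
  exists (\sum_(i < k) w i *: (a - p i)); last by rewrite sum_affine // subKr.
  exists k, (fun i => a - p i), w; split=> // i.
  by case: (Ap i) => y Ay <-; rewrite subKr.
- move=> [y [k [p [w [Ap w0 w1 ->]]]] <-].
  exists k, (fun i => a - p i), w; split => //; last by rewrite sum_affine.
  by move=> i; exists (p i).
Qed.

Section VoronoiTranslation.
Variables (R : realType) (g : nat) (Q : 'M[R]_g).
Implicit Types (u v x y z : 'rV[R]_g) (c : 'rV[int]_g).

Definition bform u v : R := (u *m Q *m v^T) 0 0.

Lemma bformDl u u' v : bform (u + u') v = bform u v + bform u' v.
Proof. by rewrite /bform !mulmxDl mxE. Qed.

Lemma bformDr u v v' : bform u (v + v') = bform u v + bform u v'.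
Proof. by rewrite /bform linearD /= mulmxDr mxE. Qed.

Lemma bformZl k u v : bform (k *: u) v = k * bform u v.
Proof. by rewrite /bform -!scalemxAl mxE. Qed.

Lemma bformZr k u v : bform u (k *: v) = k * bform u v.
Proof. by rewrite /bform linearZ /= -scalemxAr mxE. Qed.

Definition qincr v z : R := qform Q (z + v) - qform Q z.

Lemma qincrE v z : qincr v z = bform z v + bform v z + bform v v.
Proof. rewrite /qincr /qform -!/(bform _ _) !bformDl !bformDr; lra. Qed.

Lemma qincr_convex v t x y :
  qincr v (t *: x + (1 - t) *: y) = t * qincr v x + (1 - t) * qincr v y.
Proof. rewrite !qincrE !bformDl !bformDr !bformZl !bformZr; lra. Qed.

Lemma intvecD c c' : intvec R (c + c') = intvec R c + intvec R c'.
Proof. exact: map_mxD. Qed.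

Lemma intvecN c : intvec R (- c) = - intvec R c.
Proof. exact: map_mxN. Qed.

Lemma intvec_inj : injective (@intvec R g).
Proof.
move=> c c' /matrixP eq_cc'; apply/matrixP => i j.
by have := eq_cc' i j; rewrite !mxE => /intr_inj.
Qed.

Lemma VQ_qincr_ge0 z c : VQ Q z -> 0 <= qincr (intvec R c) z.
Proof. by move=> /(_ (- c)); rewrite intvecN opprK subr_ge0. Qed.

Lemma VQ_shift z c :
  VQ Q z -> qincr (intvec R c) z = 0 -> VQ Q (z + intvec R c).
Proof.
move=> Vz /eqP; rewrite subr_eq0 => /eqP d0 c'; rewrite /= d0.
by have := Vz (c' - c); rewrite intvecD intvecN opprD opprK addrA addrAC.
Qed.

Lemma Dset_qincr a c : Dset Q a c -> qincr (intvec R c) (a - intvec R c) = 0.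
Proof. by rewrite /Dset /= /qincr subrK => ->; rewrite subrr. Qed.

Lemma is_vertex_sub_Dset a c :
  is_vertex Q a -> Dset Q a c -> is_vertex Q (a - intvec R c).
Proof.
move=> [Va extr_a] Dc; set v := intvec R c.
have d0 := Dset_qincr _ _ Dc; rewrite -/v in d0.
split.
  have -> : a - v = a + intvec R (- c) by rewrite intvecN.
  by apply: VQ_shift; rewrite // /qincr intvecN -[qform _ (a - _)]Dc subrr.
move=> x y t Vx Vy t01 E.
have dx : 0 <= qincr v x := VQ_qincr_ge0 _ c Vx.
have dy : 0 <= qincr v y := VQ_qincr_ge0 _ c Vy.
have /andP[t0 t1] := t01.
have dxy : qincr v x = 0 /\ qincr v y = 0.
  by move: d0; rewrite E qincr_convex -/v => d0; split; nra.
apply: (addIr v).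
apply: (extr_a _ _ t (VQ_shift _ _ Vx dxy.1) (VQ_shift _ _ Vy dxy.2) t01).
by rewrite !scalerDr addrACA -E -scalerDl [t + _]addrC subrK scale1r subrK.
Qed.

Lemma vclassE a :
  is_vertex Q a -> vclass Q a = [set a - x | x in @intvec R g @` Dset Q a].
Proof.
move=> Va; rewrite image_comp; apply/seteqP; split => x.
  by move=> [_ [c Dc ->]]; exists c.
move=> [c Dc <-]; split; last by exists c.
exact: is_vertex_sub_Dset.
Qed.

End VoronoiTranslation.

Theorem corollary2p5 (R : realType) (n m g : nat) (src tgt : 'I_m -> 'I_n)
  (B : 'M[int]_(g, m)) (a : 'rV[R]_g) :
  graph_connected src tgt ->
  (1 <= g)%N ->
  rows_Zbasis_H1 src tgt B ->
  is_vertex (Qreal R B) a ->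
  convhull (vclass (Qreal R B) a)
    = [set a - x | x in convhull (@intvec R g @` Dset (Qreal R B) a)]
  /\ (vclass (Qreal R B) a #= Dset (Qreal R B) a).
Proof.
move=> _ _ _ Va; rewrite vclassE //; split; first exact: convhull_sub_image.
rewrite image_comp; apply: inj_card_eq => c c' _ _ /= /addrI /oppr_inj.
exact: intvec_inj.
Qed.
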